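(* Let $(X,d)$ be a compact metric space with the $E_{1,0}$-property. Then $(X,d)$ has the $E_{1,g}$-property.
   Context: Local slope: $s[u](\bar x):=\limsup_{x\to\bar x}\frac{\max\{u(\bar x)-u(x),0\}}{d(\bar x,x)}$ (zero if $\bar x$ isolated), computed in $\overline\Omega$ for $u:\overline\Omega\to\mathbb{R}$. For nonempty open $\Omega\subsetneq X$, bounded continuous $\ell:\Omega\to\mathbb{R}$, $g:\partial\Omega\to\mathbb{R}$ satisfy (CC) if for all $x,y\in\partial\Omega$, $g(x)-g(y)\le\inf\{\int_0^T\ell(\gamma(t))dt\}$ over $1$-Lipschitz $\gamma:[0,T]\to\overline\Omega$ with $\gamma(0)=y$, $\gamma(T)=x$, $\gamma((0,T))\subset\Omega$ ($\inf\emptyset=+\infty$). $(X,d)$ has the $E_{1,0}$-property if for every nonempty open $\Omega\subsetneq X$ there is a continuous $u:\overline\Omega\to\mathbb{R}$ with $s[u]=1$ on $\Omega$ and $u=0$ on $\partial\Omega$. $(X,d)$ has the $E_{1,g}$-property if for every nonempty open $\Omega\subsetneq X$ and every bounded continuous $g:\partial\Omega\to\mathbb{R}$ such that $(\ell\equiv1,g)$ satisfies (CC), there is a continuous $u:\overline\Omega\to\mathbb{R}$ with $s[u]=1$ on $\Omega$ and $u=g$ on $\partial\Omega$. *)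

From Stdlib Require Import Reals List.
From Coquelicot Require Import Coquelicot.
Open Scope R_scope.

Section MetricDefs.
Variable X : Type.
Variable d : X -> X -> R.

Definition is_metric : Prop :=
  (forall x y, 0 <= d x y) /\
  (forall x y, d x y = 0 <-> x = y) /\
  (forall x y, d x y = d y x) /\
  (forall x y z, d x z <= d x y + d y z).

Definition is_open (U : X -> Prop) : Prop :=
  forall x, U x -> exists r, 0 < r /\ forall y, d x y < r -> U y.

Definition closure (U : X -> Prop) (x : X) : Prop :=
  forall r, 0 < r -> exists y, U y /\ d x y < r.

Definition boundary (U : X -> Prop) (x : X) : Prop :=
  closure U x /\ closure (fun y => ~ U y) x.

Definition compact_space : Prop :=
  forall (I : Type) (V : I -> X -> Prop),
    (forall i, is_open (V i)) -> (forall x, exists i, V i x) ->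
    exists l : list I, forall x, exists i, In i l /\ V i x.

Definition continuous_on (A : X -> Prop) (f : X -> R) : Prop :=
  forall x, A x -> forall eps, 0 < eps -> exists delta, 0 < delta /\
    forall y, A y -> d x y < delta -> Rabs (f x - f y) < eps.

Definition bounded_on (A : X -> Prop) (f : X -> R) : Prop :=
  exists M, forall x, A x -> Rabs (f x) <= M.

(* The value 0 is added to each sup set: since the
   quotients are >= 0 this does not change the sup when the punctured ball
   meets cl Omega, and it yields 0 when xb is isolated. *)
Definition slope_sup (Omega : X -> Prop) (u : X -> R) (xb : X) (r : R) : Rbar :=
  Rbar_lub (fun v : Rbar => v = Finite 0 \/
    exists x, closure Omega x /\ 0 < d xb x < r /\
      v = Finite (Rmax (u xb - u x) 0 / d xb x)).

Definition local_slope (Omega : X -> Prop) (u : X -> R) (xb : X) : Rbar :=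
  Rbar_glb (fun w : Rbar => exists r, 0 < r /\ w = slope_sup Omega u xb r).

Definition admissible_curve (Omega : X -> Prop) (y x : X) (T : R) (gamma : R -> X) : Prop :=
  0 <= T /\
  (forall s t, 0 <= s <= T -> 0 <= t <= T -> d (gamma s) (gamma t) <= Rabs (s - t)) /\
  (forall t, 0 <= t <= T -> closure Omega (gamma t)) /\
  gamma 0 = y /\ gamma T = x /\
  (forall t, 0 < t < T -> Omega (gamma t)).

(* compatibility condition (CC) for (l, g); inf of the empty set is +oo
   (Rbar_glb of the empty set is p_infty) *)
Definition CC (Omega : X -> Prop) (l g : X -> R) : Prop :=
  forall x y, boundary Omega x -> boundary Omega y ->
    Rbar_le (Finite (g x - g y))
      (Rbar_glb (fun v : Rbar => exists T gamma,
         admissible_curve Omega y x T gamma /\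
         v = Finite (RInt (fun t => l (gamma t)) 0 T))).

Definition nonempty_proper_open (Omega : X -> Prop) : Prop :=
  is_open Omega /\ (exists x, Omega x) /\ (exists x, ~ Omega x).

Definition E10_property : Prop :=
  forall Omega, nonempty_proper_open Omega ->
    exists u : X -> R,
      continuous_on (closure Omega) u /\
      (forall x, Omega x -> local_slope Omega u x = Finite 1) /\
      (forall x, boundary Omega x -> u x = 0).

Definition E1g_property : Prop :=
  forall Omega, nonempty_proper_open Omega ->
    forall g : X -> R,
      bounded_on (boundary Omega) g -> continuous_on (boundary Omega) g ->
      CC Omega (fun _ => 1) g ->
      exists u : X -> R,
        continuous_on (closure Omega) u /\
        (forall x, Omega x -> local_slope Omega u x = Finite 1) /\
        (forall x, boundary Omega x -> u x = g x).

End MetricDefs.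

(** The solution is the value function of an optimal control problem,
    [u x = inf { g y + T | y on the boundary, gamma admissible from y to x of length T }].
    (CC) gives [u = g] on the boundary, and boundedness of [g] makes [u] finite.

    The E_{1,0}-property enters three times.  First, in a compact space a continuous
    function of slope [>= 1] can be followed downhill: joining steepest-descent steps
    into chains, splitting chains by their values, and passing to the limit along
    dyadic parameters produces, for every [c < 1], a 1-Lipschitz curve from the
    boundary to [x] along which the function decreases at rate [c].  Applied to the
    E_{1,0} solution on [Om], this shows that every point is reached by admissible
    curves.  Second, applied to the complement of a point [x], it joins all points
    near [x] to [x] by short curves, which makes [u] continuous.  Third, applied to
    [Om' = {y | d x y < rho /\ u y > u x - rho / 2}], its solution [w] satisfies
    [w x >= rho / 2] and [w <= u - u x + rho / 2] on [Om'], so the upper slope bound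
    of [w] at [x] transfers to [u]; the lower slope bound comes from near-optimal
    curves. *)

From Stdlib Require Import Reals Lra Lia List Classical ClassicalEpsilon.
From Coquelicot Require Import Coquelicot.
Open Scope R_scope.

Lemma inv_INR_S_pos n : 0 < / INR (S n).
Proof. apply Rinv_0_lt_compat, lt_0_INR; lia. Qed.

Lemma inv_INR_S_eventually_lt e :
  0 < e -> exists N, forall n, (N <= n)%nat -> / INR (S n) < e.
Proof.
  intro He. destruct (archimed_cor1 e He) as [N [HN HN0]]. exists N. intros n Hn.
  apply Rle_lt_trans with (/ INR N); auto.
  apply Rinv_le_contravar. apply lt_0_INR; lia. apply le_INR; lia.
Qed.

Lemma INR_S_le_pow2 n : INR (S n) <= 2 ^ n.
Proof.
  induction n; [simpl; lra|]. rewrite !S_INR in *. simpl. pose proof (pos_INR n). lra.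
Qed.

Lemma div_pow2_eventually_lt a e :
  0 <= a -> 0 < e -> exists N, forall n, (N <= n)%nat -> a / 2 ^ n < e.
Proof.
  intros Ha He. destruct (inv_INR_S_eventually_lt (e / (a + 1))) as [N HN].
  { apply Rdiv_lt_0_compat; lra. }
  exists N. intros n Hn. specialize (HN n Hn).
  pose proof (INR_S_le_pow2 n). pose proof (lt_0_INR (S n) ltac:(lia)).
  apply Rle_lt_trans with ((a + 1) / INR (S n)).
  - unfold Rdiv. apply Rmult_le_compat; try lra.
    + apply Rlt_le, Rinv_0_lt_compat. lra.
    + apply Rinv_le_contravar; lra.
  - replace e with ((a + 1) * (e / (a + 1))) by (field; lra).
    unfold Rdiv at 1. apply Rmult_lt_compat_l; lra.
Qed.

Lemma discrete_ivt (a : nat -> R) n h lam : 0 <= h ->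
  (forall i, (i < n)%nat -> 0 <= a i - a (S i) <= h) ->
  a n <= lam <= a 0%nat -> exists i, (i <= n)%nat /\ Rabs (a i - lam) <= h.
Proof.
  intro Hh. revert a. induction n as [|n IH]; intros a Hstep Hlam.
  - exists 0%nat. split; auto. rewrite Rabs_right; lra.
  - destruct (Rle_dec (a 1%nat) lam).
    + exists 0%nat. split; [lia|]. destruct (Hstep 0%nat ltac:(lia)).
      rewrite Rabs_right; lra.
    + destruct (IH (fun j => a (S j))) as [i [Hi Hai]].
      * intros i Hi. apply Hstep. lia.
      * lra.
      * exists (S i). split; [lia|auto].
Qed.

Lemma le_of_scaled_le a b : 0 <= a -> (forall c, 0 < c < 1 -> c * a <= b) -> a <= b.
Proof.
  intros Ha H. apply Rle_plus_epsilon. intros e He.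
  assert (Hc : 0 < (a + e / 2) / (a + e) < 1)
    by (split; [apply Rdiv_lt_0_compat | apply Rlt_div_l]; lra).
  specialize (H _ Hc).
  assert (Heq : a - (a + e / 2) / (a + e) * a = e / 2 * (a / (a + e))) by (field; lra).
  assert (a / (a + e) <= 1) by (apply Rle_div_l; lra).
  nra.
Qed.

Lemma Glb_Rbar_finite (E : R -> Prop) :
  (exists r, E r) -> (exists M, forall r, E r -> M <= r) ->
  (forall r, E r -> real (Glb_Rbar E) <= r) /\
  (forall e, 0 < e -> exists r, E r /\ r < real (Glb_Rbar E) + e).
Proof.
  intros [r0 Hr0] [M HM]. destruct (Glb_Rbar_correct E) as [Hlb Hglb].
  assert (H0 : Rbar_le (Glb_Rbar E) r0) by (apply Hlb; auto).
  assert (HM' : Rbar_le M (Glb_Rbar E)) by (apply Hglb; intros r Hr; apply HM; auto).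
  destruct (Glb_Rbar E) as [a| |]; simpl in H0, HM'; try contradiction. simpl. split.
  - intros r Hr. exact (Hlb r Hr).
  - intros e He. apply NNPP. intro Hn.
    assert (Hle : Rbar_le (a + e) a).
    { apply Hglb. intros r Hr. simpl. apply Rnot_lt_le. intro. apply Hn. exists r; auto. }
    simpl in Hle. lra.
Qed.

Lemma Lub_Rbar_finite (E : R -> Prop) :
  (exists r, E r) -> (exists M, forall r, E r -> r <= M) ->
  (forall r, E r -> r <= real (Lub_Rbar E)) /\
  (forall e, 0 < e -> exists r, E r /\ real (Lub_Rbar E) - e < r).
Proof.
  intros [r0 Hr0] [M HM]. destruct (Lub_Rbar_correct E) as [Hub Hlub].
  assert (H0 : Rbar_le r0 (Lub_Rbar E)) by (apply Hub; auto).
  assert (HM' : Rbar_le (Lub_Rbar E) M) by (apply Hlub; intros r Hr; apply HM; auto).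
  destruct (Lub_Rbar E) as [a| |]; simpl in H0, HM'; try contradiction. simpl. split.
  - intros r Hr. exact (Hub r Hr).
  - intros e He. apply NNPP. intro Hn.
    assert (Hle : Rbar_le a (a - e)).
    { apply Hlub. intros r Hr. simpl. apply Rnot_lt_le. intro. apply Hn. exists r; auto. }
    simpl in Hle. lra.
Qed.

Section IncrementBound.
Variables (f : R -> R) (T k : R).
Hypotheses (HT : 0 <= T) (Hk : 0 <= k).
Hypothesis f_cont : forall t, 0 <= t <= T -> forall e, 0 < e -> exists dl, 0 < dl /\
  forall s, 0 <= s <= T -> Rabs (s - t) < dl -> Rabs (f t - f s) < e.
Hypothesis f_left_slope : forall t, 0 < t <= T -> forall k', k < k' -> exists r, 0 < r /\
  forall s, 0 <= s < t -> t - s < r -> f t - f s <= k' * (t - s).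

(* The first time [tau] at which [f t - k' t] exceeds its initial value by [e] cannot exist:
   just before [tau], the left slope bound [(k + k') / 2 < k'] makes [f t - k' t] larger. *)
Lemma increment_le_strict k' e : k < k' -> 0 < e -> f T - f 0 <= k' * T + e.
Proof.
  intros Hk' He. set (g := fun t => f t - k' * t).
  set (Above := fun t => 0 <= t <= T /\ g t > g 0 + e).
  destruct (classic (exists t, Above t)) as [Hne|Hemp].
  2:{ apply Rnot_lt_le. intro. apply Hemp. exists T. split; [lra|]. unfold g. lra. }
  destruct (Glb_Rbar_finite Above Hne) as [Hlb Happrox].
  { exists 0. intros r [Hr _]. lra. }
  set (tau := real (Glb_Rbar Above)) in *.
  destruct Hne as [t0 Ht0].
  assert (Htau0 : 0 <= tau).
  { apply Rnot_lt_le. intro. destruct (Happrox (- tau) ltac:(lra)) as [r [[Hr _] Hlt]]. lra. }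
  assert (HtauT : tau <= T) by (pose proof (Hlb t0 Ht0); destruct Ht0; lra).
  assert (Hgtau : g tau >= g 0 + e).
  { apply Rnot_lt_ge. intro Hlt.
    destruct (f_cont tau ltac:(lra) (g 0 + e - g tau) ltac:(lra)) as [dl [Hdl Hd]].
    destruct (Happrox dl Hdl) as [s [[Hs Hgs] Hs']].
    pose proof (Hlb s (conj Hs Hgs)).
    specialize (Hd s Hs ltac:(rewrite Rabs_right; lra)).
    apply Rabs_def2 in Hd. unfold g in *. nra. }
  assert (Htaupos : 0 < tau) by (destruct Htau0 as [|Heq]; auto; rewrite <- Heq in Hgtau; lra).
  destruct (f_left_slope tau ltac:(lra) ((k + k') / 2) ltac:(lra)) as [r [Hr Hslope]].
  set (s := Rmax 0 (tau - r / 2)).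
  assert (Hs : 0 <= s < tau /\ tau - s < r)
    by (unfold s, Rmax; destruct (Rle_dec 0 (tau - r / 2)); lra).
  assert (Hgs : g s <= g 0 + e).
  { apply Rnot_lt_le. intro. assert (tau <= s) by (apply Hlb; split; lra). lra. }
  specialize (Hslope s ltac:(lra) ltac:(lra)). unfold g in *. nra.
Qed.

Lemma increment_le : f T - f 0 <= k * T.
Proof.
  apply Rle_plus_epsilon. intros e He.
  set (k' := k + e / (2 * (T + 1))).
  assert (Hpos : 0 < e / (2 * (T + 1))) by (apply Rdiv_lt_0_compat; lra).
  assert (HkT : e / (2 * (T + 1)) * T <= e / 2).
  { replace (e / (2 * (T + 1)) * T) with (e / 2 * (T / (T + 1))) by (field; lra).
    assert (T / (T + 1) <= 1) by (apply Rle_div_l; lra). nra. }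
  pose proof (increment_le_strict k' (e / 2) ltac:(unfold k'; lra) ltac:(lra)).
  unfold k' in *. nra.
Qed.

End IncrementBound.

(** * Metric spaces *)

Section Metric.
Variables (X : Type) (d : X -> X -> R).
Hypothesis d_metric : is_metric X d.
Local Notation cl := (closure X d).

Lemma dist_ge0 x y : 0 <= d x y. Proof. apply d_metric. Qed.
Lemma dist_sym x y : d x y = d y x. Proof. apply d_metric. Qed.
Lemma dist_triangle x y z : d x z <= d x y + d y z. Proof. apply d_metric. Qed.
Lemma dist_xx x : d x x = 0. Proof. apply d_metric; reflexivity. Qed.
Lemma dist_eq0 x y : d x y = 0 -> x = y. Proof. apply d_metric. Qed.

Lemma dist_pos x y : x <> y -> 0 < d x y.
Proof.
  intro Hxy. destruct (dist_ge0 x y) as [|H]; auto. exfalso. apply Hxy, dist_eq0. auto.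
Qed.

Lemma dist_le_eps_eq x y : (forall e, 0 < e -> d x y <= e) -> x = y.
Proof.
  intro H. apply dist_eq0, Rle_antisym; [|apply dist_ge0].
  apply Rle_plus_epsilon. intros e He. rewrite Rplus_0_l. auto.
Qed.

Lemma subset_closure (U : X -> Prop) x : U x -> cl U x.
Proof. intros Hx r Hr. exists x. rewrite dist_xx. auto. Qed.

Lemma closure_closure (U : X -> Prop) x : cl (cl U) x -> cl U x.
Proof.
  intros H r Hr. destruct (H (r/2) ltac:(lra)) as [y [Hy Hxy]].
  destruct (Hy (r/2) ltac:(lra)) as [z [Hz Hyz]]. exists z; split; auto.
  pose proof (dist_triangle x y z). lra.
Qed.

Lemma open_ball x r : is_open X d (fun y => d x y < r).
Proof.
  intros y Hy. exists (r - d x y). split; [lra|].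
  intros z Hz. pose proof (dist_triangle x y z). lra.
Qed.

Lemma boundary_open_iff (U : X -> Prop) x :
  is_open X d U -> boundary X d U x <-> cl U x /\ ~ U x.
Proof.
  intro HU. split.
  - intros [Hx Hcx]. split; auto. intro Ux. destruct (HU x Ux) as [r [Hr Hball]].
    destruct (Hcx r Hr) as [y [Hy Hxy]]. apply Hy, Hball, Hxy.
  - intros [Hx Hnx]. split; auto. now apply subset_closure.
Qed.

Hypothesis d_compact : compact_space X d.

Lemma compact_cluster_point (a : nat -> X) :
  exists p, forall e, 0 < e -> forall N, exists n, (N <= n)%nat /\ d (a n) p < e.
Proof.
  apply NNPP. intro Hno.
  set (I := {p : X & {e : R & {N : nat | 0 < e /\ forall n, (N <= n)%nat -> e <= d (a n) p}}}).
  set (V := fun (i : I) (y : X) => d (projT1 i) y < projT1 (projT2 i)).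
  set (Nof := fun i : I => proj1_sig (projT2 (projT2 i))).
  destruct (d_compact I V) as [l Hl].
  - intro i. apply open_ball.
  - intro p. apply NNPP. intro Hp. apply Hno. exists p. intros e He N.
    apply NNPP. intro Hn. apply Hp.
    assert (HN : forall n, (N <= n)%nat -> e <= d (a n) p).
    { intros n Hn'. apply Rnot_lt_le. intro. apply Hn. exists n. auto. }
    exists (existT _ p (existT _ e (exist _ N (conj He HN)))).
    unfold V; simpl. rewrite dist_xx. auto.
  - destruct (Hl (a (list_max (map Nof l)))) as [i [Hi HV]].
    assert (Hmax : (Nof i <= list_max (map Nof l))%nat).
    { pose proof (proj1 (list_max_le (map Nof l) _) (le_n _)) as Hall.
      rewrite Forall_forall in Hall. apply Hall, in_map, Hi. }
    pose proof (proj2 (proj2_sig (projT2 (projT2 i))) _ Hmax) as Hfar.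
    unfold V in HV. rewrite dist_sym in Hfar. lra.
Qed.

Lemma closed_cluster_point (K : X -> Prop) (P : nat -> X -> Prop) :
  (forall x, cl K x -> K x) -> (forall k, exists y, K y /\ P k y) ->
  exists m, K m /\
    forall e, 0 < e -> forall N, exists k y, (N <= k)%nat /\ K y /\ P k y /\ d y m < e.
Proof.
  intros HK HP.
  set (a := fun k => proj1_sig (constructive_indefinite_description _ (HP k))).
  assert (Ha : forall k, K (a k) /\ P k (a k))
    by (intro k; exact (proj2_sig (constructive_indefinite_description _ (HP k)))).
  destruct (compact_cluster_point a) as [m Hm]. exists m. split.
  - apply HK. intros r Hr. destruct (Hm r Hr 0%nat) as [k [_ Hk]].
    exists (a k). split; [apply Ha|]. rewrite dist_sym; auto.
  - intros e He N. destruct (Hm e He N) as [k [Hk Hd]].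
    exists k, (a k). repeat split; auto; apply Ha.
Qed.

Lemma compact_limit (a : nat -> X) (s : nat -> R) :
  (forall n m, (n <= m)%nat -> d (a m) (a n) <= s n) ->
  exists p, forall n, d (a n) p <= s n.
Proof.
  intro Ha. destruct (compact_cluster_point a) as [p Hp]. exists p. intro n.
  apply Rle_plus_epsilon. intros e He. destruct (Hp e He n) as [m [Hm Hd]].
  pose proof (Ha n m Hm). pose proof (dist_triangle (a n) (a m) p).
  rewrite (dist_sym (a m)) in *. lra.
Qed.

Lemma continuous_closed_bounded_below (K : X -> Prop) (v : X -> R) :
  (forall x, cl K x -> K x) -> continuous_on X d K v ->
  exists M, forall y, K y -> M <= v y.
Proof.
  intros HK Hv. apply NNPP. intro Hunb.
  assert (Hlow : forall k : nat, exists y, K y /\ v y < - INR k).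
  { intro k. apply NNPP. intro Hk. apply Hunb. exists (- INR k). intros y Hy.
    apply Rnot_lt_le. intro. apply Hk. exists y; auto. }
  destruct (closed_cluster_point K _ HK Hlow) as [m [Km Hm]].
  destruct (Hv m Km 1 ltac:(lra)) as [dl [Hdl Hcont]].
  destruct (INR_archimed 1 (Rabs (v m) + 1) ltac:(lra)) as [N HN].
  destruct (Hm dl Hdl N) as [k [y [Hk [Ky [Hvy Hd]]]]].
  rewrite dist_sym in Hd. specialize (Hcont y Ky Hd).
  pose proof (le_INR _ _ Hk). pose proof (Rle_abs (- v m)). rewrite Rabs_Ropp in *.
  apply Rabs_def2 in Hcont. lra.
Qed.

End Metric.

(** * Local slope *)

Section Slope.
Variables (X : Type) (d : X -> X -> R) (Om : X -> Prop) (u : X -> R) (x : X).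
Local Notation cl := (closure X d).

Definition slope_ge1 : Prop :=
  forall r, 0 < r -> forall c, 0 < c < 1 ->
    exists y, cl Om y /\ 0 < d x y < r /\ c * d x y < u x - u y.

Definition slope_le1 : Prop :=
  forall c, 1 < c -> exists r, 0 < r /\
    forall y, cl Om y -> 0 < d x y < r -> u x - u y <= c * d x y.

Lemma slope_quotient_le y c : 0 < d x y -> 0 <= c ->
  (Rmax (u x - u y) 0 / d x y <= c <-> u x - u y <= c * d x y).
Proof.
  intros Hd Hc. rewrite Rle_div_l by exact Hd. unfold Rmax.
  destruct (Rle_dec (u x - u y) 0); split; intro; nra.
Qed.

Let sup_set r := fun v : Rbar => v = Finite 0 \/
  exists y, cl Om y /\ 0 < d x y < r /\ v = Finite (Rmax (u x - u y) 0 / d x y).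

Lemma slope_sup_is_lub r : Rbar_is_lub (sup_set r) (slope_sup X d Om u x r).
Proof. exact (proj2_sig (Rbar_ex_lub (sup_set r))). Qed.

Lemma local_slope_is_glb :
  Rbar_is_glb (fun w => exists r, 0 < r /\ w = slope_sup X d Om u x r)
    (local_slope X d Om u x).
Proof. exact (proj2_sig (Rbar_ex_glb _)). Qed.

Lemma slope_sup_le r c : 0 <= c ->
  (forall y, cl Om y -> 0 < d x y < r -> u x - u y <= c * d x y) ->
  Rbar_le (slope_sup X d Om u x r) c.
Proof.
  intros Hc Hy. apply (proj2 (slope_sup_is_lub r)).
  intros v [-> | [y [Hcy [Hd ->]]]]; simpl; [lra|].
  apply slope_quotient_le; [lra|auto|auto].
Qed.

Lemma slope_ge1_of_local_slope : local_slope X d Om u x = Finite 1 -> slope_ge1.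
Proof.
  intros H1 r Hr c Hc. apply NNPP. intro Hno.
  assert (Hlow : Rbar_le 1 (slope_sup X d Om u x r)).
  { destruct local_slope_is_glb as [Hlb _]. rewrite H1 in Hlb. apply Hlb. exists r; auto. }
  assert (Hup : Rbar_le (slope_sup X d Om u x r) c).
  { apply slope_sup_le; [lra|]. intros y Hy Hd.
    apply Rnot_lt_le. intro. apply Hno. exists y; auto. }
  pose proof (Rbar_le_trans _ _ _ Hlow Hup). simpl in *. lra.
Qed.

Lemma slope_le1_of_local_slope : local_slope X d Om u x = Finite 1 -> slope_le1.
Proof.
  intros H1 c Hc. apply NNPP. intro Hno.
  assert (Hcle : Rbar_le c 1).
  { destruct local_slope_is_glb as [_ Hglb]. rewrite H1 in Hglb. apply Hglb.
    intros w [r [Hr ->]]. apply NNPP. intro Hlt. apply Hno. exists r. split; auto.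
    intros y Hy Hd. apply Rnot_lt_le. intro Hbig. apply Hlt.
    eapply Rbar_le_trans; [|apply (proj1 (slope_sup_is_lub r)); right; exists y; eauto].
    simpl. apply Rnot_lt_le. intro Hq. apply Rlt_le in Hq.
    apply slope_quotient_le in Hq; lra. }
  simpl in Hcle. lra.
Qed.

Lemma local_slope_of_slope_bounds : slope_ge1 -> slope_le1 -> local_slope X d Om u x = Finite 1.
Proof.
  intros Hge Hle. apply Rbar_is_glb_unique. split.
  - intros w [r [Hr ->]].
    destruct (Rbar_le_lt_dec 1 (slope_sup X d Om u x r)) as [|Hlt]; auto. exfalso.
    assert (H0 : Rbar_le 0 (slope_sup X d Om u x r))
      by (apply (proj1 (slope_sup_is_lub r)); left; auto).
    destruct (slope_sup X d Om u x r) as [L| |] eqn:HL; simpl in Hlt, H0; try contradiction.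
    destruct (Hge r Hr ((L + 1) / 2) ltac:(lra)) as [y [Hy [Hd Hsteep]]].
    assert (Hq : Rbar_le (Rmax (u x - u y) 0 / d x y) L).
    { rewrite <- HL. apply (proj1 (slope_sup_is_lub r)). right. exists y; auto. }
    simpl in Hq. apply slope_quotient_le in Hq; [nra|lra|lra].
  - intros b Hb. destruct (Rbar_le_lt_dec b 1) as [|Hlt]; auto. exfalso.
    set (c := match b with Finite b' => (1 + b') / 2 | _ => 2 end).
    assert (Hc : 1 < c /\ Rbar_lt c b) by (unfold c; destruct b; simpl in *; try lra; auto).
    destruct (Hle c (proj1 Hc)) as [r [Hr Hr']].
    assert (Hup : Rbar_le (slope_sup X d Om u x r) c) by (apply slope_sup_le; [lra|auto]).
    assert (Hlow : Rbar_le b (slope_sup X d Om u x r)) by (apply Hb; exists r; auto).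
    pose proof (Rbar_le_trans _ _ _ Hlow Hup). destruct b; simpl in *; try lra; auto.
Qed.

Lemma local_slope_eq1_iff :
  local_slope X d Om u x = Finite 1 <-> slope_ge1 /\ slope_le1.
Proof.
  split.
  - intro H1. split; [apply slope_ge1_of_local_slope | apply slope_le1_of_local_slope]; auto.
  - intros [Hge Hle]. now apply local_slope_of_slope_bounds.
Qed.

End Slope.

(** * Admissible curves *)

Section Curves.
Variables (X : Type) (d : X -> X -> R).
Hypothesis d_metric : is_metric X d.
Local Notation cl := (closure X d).
Local Notation admissible := (admissible_curve X d).
Let dist_sym := dist_sym X d d_metric.
Let dist_xx := dist_xx X d d_metric.
Let dist_triangle := dist_triangle X d d_metric.

Lemma admissible_const Om y : cl Om y -> admissible Om y y 0 (fun _ => y).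
Proof.
  intro Hy. repeat split; auto; try lra.
  - intros. rewrite dist_xx. apply Rabs_pos.
  - intros t Ht. lra.
Qed.

Lemma admissible_dist_le Om y x T ga : admissible Om y x T ga -> d y x <= T.
Proof.
  intros [HT [Hlip [_ [H0 [HT' _]]]]]. rewrite <- H0, <- HT'.
  eapply Rle_trans; [apply Hlip; lra|]. rewrite Rabs_left1; lra.
Qed.

Lemma admissible_prefix Om y x T ga s : admissible Om y x T ga -> 0 <= s <= T ->
  admissible Om y (ga s) s ga.
Proof.
  intros [HT [Hlip [Hcl [H0 [HT' Hin]]]]] Hs. repeat split; auto; try lra.
  - intros. apply Hlip; lra.
  - intros. apply Hcl; lra.
  - intros. apply Hin; lra.
Qed.

Lemma admissible_rev Om y x T ga : admissible Om y x T ga ->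
  admissible Om x y T (fun t => ga (T - t)).
Proof.
  intros [HT [Hlip [Hcl [H0 [HT' Hin]]]]]. repeat split; try lra.
  - intros s0 t0 Hs0 Ht0. replace (s0 - t0) with ((T - t0) - (T - s0)) by ring.
    rewrite Rabs_minus_sym. apply Hlip; lra.
  - intros. apply Hcl; lra.
  - now rewrite Rminus_0_r.
  - now replace (T - T) with 0 by ring.
  - intros. apply Hin; lra.
Qed.

Lemma admissible_mono Om Om' y x T ga :
  (forall z, cl Om' z -> cl Om z) -> (forall z, Om' z -> Om z) ->
  admissible Om' y x T ga -> admissible Om y x T ga.
Proof. intros Hcl Hin [HT [Hlip [Hc [H0 [HT' Hi]]]]]. repeat split; auto. Qed.

Definition curve_concat (T1 : R) (ga1 ga2 : R -> X) : R -> X :=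
  fun t => if Rle_dec t T1 then ga1 t else ga2 (t - T1).

Lemma admissible_concat Om y b x T1 T2 ga1 ga2 :
  admissible Om y b T1 ga1 -> admissible Om b x T2 ga2 -> Om b ->
  admissible Om y x (T1 + T2) (curve_concat T1 ga1 ga2).
Proof.
  intros [HT1 [Hl1 [Hc1 [H01 [H11 Hi1]]]]] [HT2 [Hl2 [Hc2 [H02 [H12 Hi2]]]]] Hb.
  unfold curve_concat. repeat split; try lra.
  - assert (Hacross : forall s t, 0 <= s <= T1 -> T1 < t <= T1 + T2 ->
             d (ga1 s) (ga2 (t - T1)) <= Rabs (s - t)).
    { intros s t Hs Ht. pose proof (dist_triangle (ga1 s) b (ga2 (t - T1))).
      assert (d (ga1 s) b <= T1 - s).
      { rewrite <- H11. eapply Rle_trans; [apply Hl1; lra|]. rewrite Rabs_left1; lra. }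
      assert (d b (ga2 (t - T1)) <= t - T1).
      { rewrite <- H02. eapply Rle_trans; [apply Hl2; lra|]. rewrite Rabs_left1; lra. }
      rewrite Rabs_left1 by lra. lra. }
    intros s t Hs Ht. destruct (Rle_dec s T1); destruct (Rle_dec t T1).
    + apply Hl1; lra.
    + apply Hacross; lra.
    + rewrite dist_sym, Rabs_minus_sym. apply Hacross; lra.
    + replace (s - t) with ((s - T1) - (t - T1)) by ring. apply Hl2; lra.
  - intros t Ht. destruct (Rle_dec t T1); [apply Hc1 | apply Hc2]; lra.
  - destruct (Rle_dec 0 T1); [auto | lra].
  - destruct (Rle_dec (T1 + T2) T1).
    + assert (T2 = 0) by lra. subst T2. now rewrite Rplus_0_r, H11, <- H02.
    + now replace (T1 + T2 - T1) with T2 by ring.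
  - intros t Ht. destruct (Rle_dec t T1).
    + destruct (Req_dec t T1) as [->|]; [now rewrite H11 | apply Hi1; lra].
    + apply Hi2; lra.
Qed.

Lemma last_exit_time Om T ga : is_open X d Om -> 0 <= T ->
  (forall s t, 0 <= s <= T -> 0 <= t <= T -> d (ga s) (ga t) <= Rabs (s - t)) ->
  ~ Om (ga 0) -> Om (ga T) ->
  exists s, 0 <= s < T /\ ~ Om (ga s) /\ forall t, s < t <= T -> Om (ga t).
Proof.
  intros HO HT Hlip H0 HTin.
  set (Out := fun s => 0 <= s <= T /\ ~ Om (ga s)).
  destruct (Lub_Rbar_finite Out) as [Hub Happrox].
  { exists 0. split; auto. lra. }
  { exists T. intros r [Hr _]. lra. }
  set (s := real (Lub_Rbar Out)) in *.
  assert (Hs0 : 0 <= s) by (apply Hub; split; [lra|auto]).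
  assert (HsT : s <= T).
  { apply Rnot_lt_le. intro. destruct (Happrox (s - T) ltac:(lra)) as [r [[Hr _] Hlt]]. lra. }
  assert (Hout : ~ Om (ga s)).
  { intro Hin. destruct (HO _ Hin) as [rho [Hrho Hball]].
    destruct (Happrox rho Hrho) as [s0 [[Hs0' Hout0] Hlt]].
    assert (s0 <= s) by (apply Hub; split; auto).
    apply Hout0, Hball. rewrite dist_sym. eapply Rle_lt_trans; [apply Hlip; lra|].
    rewrite Rabs_left1; lra. }
  exists s. split; [|split; auto].
  - destruct HsT as [|Heq]; [lra|]. rewrite Heq in Hout. contradiction.
  - intros t Ht. apply NNPP. intro. assert (t <= s) by (apply Hub; split; [lra|auto]). lra.
Qed.

Lemma admissible_last_exit Om T ga : is_open X d Om -> 0 <= T ->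
  (forall s t, 0 <= s <= T -> 0 <= t <= T -> d (ga s) (ga t) <= Rabs (s - t)) ->
  ~ Om (ga 0) -> Om (ga T) ->
  exists s, 0 <= s < T /\ boundary X d Om (ga s) /\
    admissible Om (ga s) (ga T) (T - s) (fun t => ga (s + t)).
Proof.
  intros HO HT Hlip H0 HTin.
  destruct (last_exit_time Om T ga HO HT Hlip H0 HTin) as [s [Hs [Hout Hafter]]].
  assert (Hcl : cl Om (ga s)).
  { intros r Hr. set (t := s + Rmin r (T - s) / 2).
    assert (Ht : s < t <= T /\ t - s < r).
    { unfold t. pose proof (Rmin_l r (T - s)). pose proof (Rmin_r r (T - s)).
      assert (0 < Rmin r (T - s)) by (apply Rmin_pos; lra). lra. }
    exists (ga t). split; [apply Hafter; lra|].
    eapply Rle_lt_trans; [apply Hlip; lra|]. rewrite Rabs_left1; lra. }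
  exists s. split; [lra|split].
  - now apply (boundary_open_iff X d d_metric).
  - repeat split; try lra.
    + intros s0 t0 Hs0 Ht0. replace (s0 - t0) with ((s + s0) - (s + t0)) by ring.
      apply Hlip; lra.
    + intros t Ht. destruct (Req_dec t 0) as [->|]; [now rewrite Rplus_0_r|].
      apply (subset_closure X d d_metric). apply Hafter; lra.
    + now rewrite Rplus_0_r.
    + now replace (s + (T - s)) with T by ring.
    + intros t Ht. apply Hafter. lra.
Qed.

Lemma admissible_in_ball Om Om' y z T ga rho :
  (forall w, d y w < rho -> Om w) -> admissible Om' y z T ga -> T < rho ->
  admissible Om y z T ga.
Proof.
  intros Hball [HT [Hlip [_ [H0 [HT' _]]]]] HTr.
  assert (Hin : forall t, 0 <= t <= T -> Om (ga t)).
  { intros t Ht. apply Hball. rewrite <- H0.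
    eapply Rle_lt_trans; [apply Hlip; lra|]. rewrite Rabs_left1; lra. }
  repeat split; auto.
  - intros t Ht. apply (subset_closure X d d_metric), Hin, Ht.
  - intros t Ht. apply Hin. lra.
Qed.

Lemma slope_le1_along_curve Om v b z T ga :
  continuous_on X d (cl Om) v -> (forall p, Om p -> slope_le1 X d Om v p) ->
  admissible Om b z T ga -> Om z -> v z - v b <= T.
Proof.
  intros Hv Hslope Hadm Hz. destruct Hadm as [HT [Hlip [Hcl [H0 [HT' Hin]]]]].
  rewrite <- H0, <- HT'. enough (v (ga T) - v (ga 0) <= 1 * T) by lra.
  apply (increment_le (fun t => v (ga t))); [lra|lra| |].
  - intros t Ht e He. destruct (Hv (ga t) (Hcl t Ht) e He) as [dl [Hdl Hd]].
    exists dl. split; auto. intros s Hs Hst. apply Hd; [now apply Hcl|].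
    eapply Rle_lt_trans; [apply Hlip; auto|]. now rewrite Rabs_minus_sym.
  - intros t Ht k' Hk'.
    assert (Hgt : Om (ga t)) by (destruct (Req_dec t T) as [->|]; [now rewrite HT'|apply Hin; lra]).
    destruct (Hslope (ga t) Hgt k' Hk') as [r [Hr Hsl]]. exists r. split; auto.
    intros s Hs Hts. pose proof (Hlip t s ltac:(lra) ltac:(lra)) as Hd.
    rewrite Rabs_right in Hd by lra.
    destruct (dist_ge0 X d d_metric (ga t) (ga s)) as [Hpos|Hzero].
    + specialize (Hsl (ga s) (Hcl s ltac:(lra)) ltac:(lra)). nra.
    + symmetry in Hzero. apply (dist_eq0 X d d_metric) in Hzero as ->. nra.
Qed.

End Curves.

(** * Descent curves of functions of slope at least one *)

Section Descent.
Variables (X : Type) (d : X -> X -> R).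
Hypotheses (d_metric : is_metric X d) (d_compact : compact_space X d).
Variables (Om : X -> Prop) (v : X -> R) (c : R).
Hypothesis Om_open : is_open X d Om.
Hypothesis v_cont : continuous_on X d (closure X d Om) v.
Hypothesis v_steep : forall p, Om p -> slope_ge1 X d Om v p.
Hypothesis c_range : 0 < c < 1.

Local Notation K := (closure X d Om).
Let dist_ge0 := dist_ge0 X d d_metric.
Let dist_sym := dist_sym X d d_metric.
Let dist_xx := dist_xx X d d_metric.
Let dist_triangle := dist_triangle X d d_metric.

Let K_closed x : closure X d K x -> K x.
Proof. apply closure_closure, d_metric. Qed.

Let v_cont_sym p e : K p -> 0 < e ->
  exists dl, 0 < dl /\ forall y, K y -> d y p < dl -> Rabs (v y - v p) < e.
Proof.
  intros Kp He. destruct (v_cont p Kp e He) as [dl [Hdl Hd]]. exists dl. split; auto.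
  intros y Ky Hy. rewrite Rabs_minus_sym. apply Hd; auto. now rewrite dist_sym.
Qed.

Definition descent_chain (h : R) (n : nat) (f : nat -> X) : Prop :=
  (forall i, (i <= n)%nat -> K (f i)) /\
  (forall i, (i < n)%nat -> d (f i) (f (S i)) <= h /\
     c * d (f i) (f (S i)) <= v (f i) - v (f (S i)) /\ v (f i) - v (f (S i)) <= h).

Lemma descent_chain_weaken h h' n f :
  h <= h' -> descent_chain h n f -> descent_chain h' n f.
Proof.
  intros Hh [HK Hstep]. split; auto. intros i Hi. destruct (Hstep i Hi) as [? [? ?]].
  repeat split; lra.
Qed.

Lemma descent_chain_prefix h n f i :
  (i <= n)%nat -> descent_chain h n f -> descent_chain h i f.
Proof.
  intros Hi [HK Hstep]. split; intros j Hj; [apply HK | apply Hstep]; lia.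
Qed.

Lemma descent_chain_suffix h n f i : (i <= n)%nat -> descent_chain h n f ->
  descent_chain h (n - i) (fun j => f (i + j)%nat).
Proof.
  intros Hi [HK Hstep]. split.
  - intros j Hj. apply HK. lia.
  - intros j Hj. replace (i + S j)%nat with (S (i + j)) by lia. apply Hstep. lia.
Qed.

Lemma descent_chain_snoc h n f y : descent_chain h n f -> K y ->
  d (f n) y <= h -> c * d (f n) y <= v (f n) - v y -> v (f n) - v y <= h ->
  descent_chain h (S n) (fun i => if Nat.leb i n then f i else y).
Proof.
  intros [HK Hstep] Ky H1 H2 H3. split.
  - intros i Hi. destruct (Nat.leb_spec i n); auto.
  - intros i Hi. destruct (Nat.leb_spec i n); destruct (Nat.leb_spec (S i) n); try lia.
    + now apply Hstep.
    + replace i with n by lia. auto.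
Qed.

Lemma descent_chain_dist h n f :
  descent_chain h n f -> c * d (f 0%nat) (f n) <= v (f 0%nat) - v (f n).
Proof.
  intros [_ Hstep].
  enough (forall k, (k <= n)%nat -> c * d (f 0%nat) (f k) <= v (f 0%nat) - v (f k)) by auto.
  induction k as [|k IH]; intro Hk.
  - rewrite dist_xx. lra.
  - destruct (Hstep k ltac:(lia)) as [_ [Hc _]]. specialize (IH ltac:(lia)).
    pose proof (dist_triangle (f 0%nat) (f k) (f (S k))). nra.
Qed.

Definition chained (p q : X) : Prop :=
  forall h, 0 < h -> exists n f, descent_chain h n f /\ d (f 0%nat) p < h /\ d (f n) q < h.

Lemma chained_closure p q : chained p q -> K p /\ K q.
Proof.
  intro Hpq. split; apply K_closed; intros r Hr;
    destruct (Hpq r Hr) as [n [f [[HK _] [Hp Hq]]]].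
  - exists (f 0%nat). split; [exact (HK 0%nat ltac:(lia)) | now rewrite dist_sym].
  - exists (f n). split; [exact (HK n ltac:(lia)) | now rewrite dist_sym].
Qed.

Lemma chained_fine p q h : chained p q -> 0 < h ->
  exists n f, descent_chain h n f /\ d (f 0%nat) p < h /\ d (f n) q < h /\
    Rabs (v (f 0%nat) - v p) < h /\ Rabs (v (f n) - v q) < h.
Proof.
  intros Hpq Hh. destruct (chained_closure p q Hpq) as [Kp Kq].
  destruct (v_cont_sym p h Kp Hh) as [dp [Hdp Hcp]].
  destruct (v_cont_sym q h Kq Hh) as [dq [Hdq Hcq]].
  set (h' := Rmin h (Rmin dp dq)).
  assert (Hh' : 0 < h' /\ h' <= h /\ h' <= dp /\ h' <= dq).
  { unfold h'. pose proof (Rmin_l h (Rmin dp dq)). pose proof (Rmin_r h (Rmin dp dq)).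
    pose proof (Rmin_l dp dq). pose proof (Rmin_r dp dq).
    repeat split; try lra. repeat apply Rmin_pos; lra. }
  destruct (Hpq h' (proj1 Hh')) as [n [f [Hch [H0 Hn]]]].
  pose proof (proj1 Hch) as HK. exists n, f.
  split; [exact (descent_chain_weaken h' h n f ltac:(lra) Hch)|].
  split; [lra|]. split; [lra|]. split.
  - apply Hcp; [exact (HK 0%nat ltac:(lia)) | lra].
  - apply Hcq; [exact (HK n ltac:(lia)) | lra].
Qed.

Lemma chained_dist p q : chained p q -> c * d p q <= v p - v q.
Proof.
  intro Hpq. apply Rle_plus_epsilon. intros e He.
  destruct (chained_fine p q (e / 4) Hpq ltac:(lra)) as [n [f [Hch [H0 [Hn [Hv0 Hvn]]]]]].
  pose proof (descent_chain_dist _ _ _ Hch).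
  apply Rabs_def2 in Hv0. apply Rabs_def2 in Hvn.
  pose proof (dist_triangle p (f 0%nat) q). pose proof (dist_triangle (f 0%nat) (f n) q).
  rewrite (dist_sym p (f 0%nat)) in *. assert (d p q <= e / 2 + d (f 0%nat) (f n)) by lra.
  nra.
Qed.

Lemma chained_le p q : chained p q -> v q <= v p.
Proof. intro Hpq. pose proof (chained_dist p q Hpq). pose proof (dist_ge0 p q). nra. Qed.

Lemma chain_through_level p q lam h : chained p q -> v q <= lam <= v p -> 0 < h ->
  exists n f i, descent_chain h n f /\ d (f 0%nat) p < h /\ d (f n) q < h /\
    (i <= n)%nat /\ Rabs (v (f i) - lam) <= h.
Proof.
  intros Hpq Hlam Hh.
  destruct (chained_fine p q h Hpq Hh) as [n [f [Hch [H0 [Hn [Hv0 Hvn]]]]]].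
  apply Rabs_def2 in Hv0. apply Rabs_def2 in Hvn.
  exists n, f. enough (exists i, (i <= n)%nat /\ Rabs (v (f i) - lam) <= h)
    as [i Hi] by (exists i; tauto).
  destruct (Rlt_dec (v (f 0%nat)) lam).
  { exists 0%nat. split; [lia|]. rewrite Rabs_left; lra. }
  destruct (Rlt_dec lam (v (f n))).
  { exists n. split; [lia|]. rewrite Rabs_right; lra. }
  apply (discrete_ivt (fun i => v (f i))); [lra| |lra].
  intros i Hi. destruct (proj2 Hch i Hi) as [_ [Hc Hh']].
  pose proof (dist_ge0 (f i) (f (S i))). split; nra.
Qed.

Lemma chained_split p q lam : chained p q -> v q <= lam <= v p ->
  exists m, v m = lam /\ chained p m /\ chained m q.
Proof.
  intros Hpq Hlam.
  set (P := fun k y => exists n f i, descent_chain (/ INR (S k)) n f /\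
    d (f 0%nat) p < / INR (S k) /\ d (f n) q < / INR (S k) /\ (i <= n)%nat /\ y = f i /\
    Rabs (v y - lam) <= / INR (S k)).
  destruct (closed_cluster_point X d d_metric d_compact K P K_closed) as [m [Km Hm]].
  { intro k. destruct (chain_through_level p q lam _ Hpq Hlam (inv_INR_S_pos k))
      as [n [f [i [Hch [H0 [Hn [Hi Hv]]]]]]].
    exists (f i). split; [exact (proj1 Hch i Hi)|]. exists n, f, i. tauto. }
  exists m. split; [|split].
  - apply cond_eq. intros e He.
    destruct (v_cont_sym m (e / 2) Km ltac:(lra)) as [dl [Hdl Hcont]].
    destruct (inv_INR_S_eventually_lt (e / 2) ltac:(lra)) as [N HN].
    destruct (Hm dl Hdl N) as [k [y [Hk [Ky [[n [f [i [_ [_ [_ [_ [_ Hv]]]]]]]] Hd]]]]].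
    specialize (Hcont y Ky Hd). specialize (HN k Hk).
    apply Rabs_def2 in Hcont. apply Rabs_le_between in Hv. apply Rabs_def1; lra.
  - intros h Hh. destruct (inv_INR_S_eventually_lt h Hh) as [N HN].
    destruct (Hm h Hh N) as [k [y [Hk [_ [[n [f [i [Hch [H0 [_ [Hi [-> _]]]]]]]] Hd]]]]].
    specialize (HN k Hk). exists i, f. split; [|split; auto; lra].
    apply descent_chain_weaken with (/ INR (S k)); [lra|].
    now apply descent_chain_prefix with n.
  - intros h Hh. destruct (inv_INR_S_eventually_lt h Hh) as [N HN].
    destruct (Hm h Hh N) as [k [y [Hk [_ [[n [f [i [Hch [_ [Hn [Hi [-> _]]]]]]]] Hd]]]]].
    specialize (HN k Hk). exists (n - i)%nat, (fun j => f (i + j)%nat). split; [|split].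
    + apply descent_chain_weaken with (/ INR (S k)); [lra|].
      now apply descent_chain_suffix.
    + now rewrite Nat.add_0_r.
    + replace (i + (n - i))%nat with n by lia. lra.
Qed.

(* A point [y] of steepest descent from [m] (slope [> (1 + c) / 2]) is also a descent
   step of ratio [c] from every point close enough to [m]. *)
Lemma steep_step m h : Om m -> 0 < h -> exists y dl, K y /\ v y < v m /\ 0 < dl /\
  forall p, K p -> d p m < dl -> d p y < h /\ c * d p y <= v p - v y /\ v p - v y <= h.
Proof.
  intros Hm Hh. set (c' := (1 + c) / 2). pose proof (subset_closure X d d_metric Om m Hm) as Km.
  destruct (v_cont_sym m (h / 3) Km ltac:(lra)) as [dl1 [Hdl1 Hcont1]].
  set (r := Rmin (h / 2) dl1).
  assert (Hr : 0 < r /\ r <= h / 2 /\ r <= dl1)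
    by (unfold r; repeat split; [apply Rmin_pos; lra | apply Rmin_l | apply Rmin_r]).
  destruct (v_steep m Hm r (proj1 Hr) c' ltac:(unfold c'; lra)) as [y [Ky [HD Hdesc]]].
  assert (Hvy : Rabs (v y - v m) < h / 3) by (apply Hcont1; auto; rewrite dist_sym; lra).
  set (D := d m y) in *.
  set (th := Rmin ((c' - c) * D / 2) (h / 3)).
  assert (Hth : 0 < th /\ th <= (c' - c) * D / 2 /\ th <= h / 3).
  { unfold th. repeat split; [apply Rmin_pos; unfold c'; nra | apply Rmin_l | apply Rmin_r]. }
  destruct (v_cont_sym m th Km (proj1 Hth)) as [dl2 [Hdl2 Hcont2]].
  exists y, (Rmin th dl2). split; [auto|split; [unfold c' in Hdesc; nra|split]].
  { apply Rmin_pos; lra. }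
  intros p Kp Hpm. pose proof (Rmin_l th dl2). pose proof (Rmin_r th dl2).
  specialize (Hcont2 p Kp ltac:(lra)).
  apply Rabs_def2 in Hcont2. apply Rabs_def2 in Hvy.
  pose proof (dist_triangle p m y) as Htri. fold D in Htri.
  assert (Hpy : d p y <= (c' - c) * D / 2 + D) by lra.
  split; [lra|split; [|lra]].
  assert (c * d p y <= c * ((c' - c) * D / 2 + D)) by (apply Rmult_le_compat_l; lra).
  unfold c' in *. nra.
Qed.

Section ChainFrom.
Variables (x : X) (h : R).
Hypotheses (Hx : Om x) (Hh : 0 < h).

Definition inner_chain (n : nat) (f : nat -> X) : Prop :=
  f 0%nat = x /\ descent_chain h n f /\ forall i, (i <= n)%nat -> Om (f i).

Lemma inner_chain_end_minimizer : exists m, K m /\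
  (forall n f, inner_chain n f -> v m <= v (f n)) /\
  (forall e, 0 < e -> exists n f, inner_chain n f /\ d (f n) m < e).
Proof.
  set (Ends := fun r => exists n f, inner_chain n f /\ r = v (f n)).
  destruct (continuous_closed_bounded_below X d d_metric d_compact K v K_closed v_cont)
    as [M HM].
  destruct (Glb_Rbar_finite Ends) as [Hlb Happrox].
  { exists (v x), 0%nat, (fun _ => x). split; [|reflexivity].
    split; [reflexivity|split; [split|]].
    - intros. now apply (subset_closure X d d_metric).
    - intros i Hi. lia.
    - auto. }
  { exists M. intros r [n [f [[_ [[HK _] _]] ->]]]. apply HM, HK. lia. }
  set (al := real (Glb_Rbar Ends)) in *.
  set (P := fun k y => exists n f, inner_chain n f /\ y = f n /\ v y < al + / INR (S k)).
  destruct (closed_cluster_point X d d_metric d_compact K P K_closed) as [m [Km Hm]].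
  { intro k. destruct (Happrox _ (inv_INR_S_pos k)) as [r [[n [f [Hf ->]]] Hlt]].
    exists (f n). split; [exact (proj1 (proj1 (proj2 Hf)) n (le_n n))|]. exists n, f. auto. }
  exists m. split; [auto|split].
  - intros n f Hf. apply Rle_trans with al; [|apply Hlb; exists n, f; auto].
    apply Rle_plus_epsilon. intros e He.
    destruct (v_cont_sym m (e / 2) Km ltac:(lra)) as [dl [Hdl Hcont]].
    destruct (inv_INR_S_eventually_lt (e / 2) ltac:(lra)) as [N HN].
    destruct (Hm dl Hdl N) as [k [y [Hk [Ky [[n' [f' [_ [_ Hlt]]]] Hd]]]]].
    specialize (Hcont y Ky Hd). specialize (HN k Hk). apply Rabs_def2 in Hcont. lra.
  - intros e He. destruct (Hm e He 0%nat) as [k [y [_ [_ [[n [f [Hf [-> _]]]] Hd]]]]].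
    exists n, f. auto.
Qed.

(* A minimizing end [m] of chains inside [Om] cannot lie in [Om]: one more steep step
   from a chain ending near [m] would go below the infimum. *)
Lemma chain_to_exterior : exists q n f, K q /\ ~ Om q /\ f 0%nat = x /\
  descent_chain h n f /\ d (f n) q < h.
Proof.
  destruct inner_chain_end_minimizer as [m [Km [Hmin Hnear]]].
  destruct (classic (Om m)) as [Hm|Hm].
  2:{ destruct (Hnear h Hh) as [n [f [[H0 [Hch _]] Hd]]]. exists m, n, f. auto. }
  destruct (steep_step m h Hm Hh) as [y [dl [Ky [Hvy [Hdl Hstep]]]]].
  destruct (Hnear dl Hdl) as [n [f [[H0 [Hch Hin]] Hd]]].
  destruct (Hstep (f n) (proj1 Hch n (le_n n)) Hd) as [Hd1 [Hd2 Hd3]].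
  destruct (classic (Om y)) as [Hy|Hy].
  - exfalso. set (f' := fun i => if Nat.leb i n then f i else y).
    assert (Hf' : inner_chain (S n) f').
    { split; [|split].
      - unfold f'. simpl. auto.
      - apply descent_chain_snoc; auto; lra.
      - intros i Hi. unfold f'. destruct (Nat.leb_spec i n); auto. }
    specialize (Hmin _ _ Hf'). unfold f' in Hmin.
    destruct (Nat.leb_spec (S n) n); [lia|]. lra.
  - exists y, n, f. auto.
Qed.

End ChainFrom.

Lemma chained_to_exterior x : Om x -> exists q, K q /\ ~ Om q /\ chained x q.
Proof.
  intro Hx.
  set (P := fun k q => ~ Om q /\ exists n f, f 0%nat = x /\
    descent_chain (/ INR (S k)) n f /\ d (f n) q < / INR (S k)).
  destruct (closed_cluster_point X d d_metric d_compact K P K_closed) as [q [Kq Hq]].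
  { intro k. destruct (chain_to_exterior x _ Hx (inv_INR_S_pos k))
      as [q [n [f [Kq [Hq [H0 [Hch Hd]]]]]]].
    exists q. split; auto. split; auto. exists n, f. auto. }
  exists q. split; [auto|split].
  - intro Hin. destruct (Om_open q Hin) as [r [Hr Hball]].
    destruct (Hq r Hr 0%nat) as [k [y [_ [_ [[Hy _] Hd]]]]].
    apply Hy, Hball. now rewrite dist_sym.
  - intros h Hh. destruct (inv_INR_S_eventually_lt (h / 2) ltac:(lra)) as [N HN].
    destruct (Hq (h / 2) ltac:(lra) N) as [k [y [Hk [_ [[_ [n [f [H0 [Hch Hn]]]]] Hd]]]]].
    specialize (HN k Hk). exists n, f. split; [|split].
    + apply descent_chain_weaken with (/ INR (S k)); auto; lra.
    + rewrite H0, dist_xx. auto.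
    + pose proof (dist_triangle (f n) y q). lra.
Qed.

Definition chain_midpoint (p q : X) : X :=
  epsilon (inhabits p) (fun m => v m = (v p + v q) / 2 /\ chained p m /\ chained m q).

Lemma chain_midpoint_spec p q : chained p q ->
  v (chain_midpoint p q) = (v p + v q) / 2 /\
  chained p (chain_midpoint p q) /\ chained (chain_midpoint p q) q.
Proof.
  intro Hpq. unfold chain_midpoint. apply epsilon_spec. pose proof (chained_le p q Hpq).
  apply chained_split; auto. lra.
Qed.

Section DyadicCurve.
Variables x q : X.
Hypotheses (Hxq : chained x q) (Hneq : x <> q).

(* [dyadic_point n k] is the point with parameter [k / 2 ^ n] of a curve from [q] to [x]. *)
Fixpoint dyadic_point (n k : nat) : X :=
  match n with
  | O => if Nat.eqb k 0 then q else x
  | S n' => if Nat.even k then dyadic_point n' (Nat.div2 k)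
            else chain_midpoint (dyadic_point n' (S (Nat.div2 k))) (dyadic_point n' (Nat.div2 k))
  end.

Lemma dyadic_point_S n k : dyadic_point (S n) k =
  if Nat.even k then dyadic_point n (Nat.div2 k)
  else chain_midpoint (dyadic_point n (S (Nat.div2 k))) (dyadic_point n (Nat.div2 k)).
Proof. reflexivity. Qed.

Lemma dyadic_point_even n j : dyadic_point (S n) (2 * j) = dyadic_point n j.
Proof. now rewrite dyadic_point_S, Nat.even_mul, Nat.div2_double. Qed.

Lemma dyadic_point_odd n j :
  dyadic_point (S n) (S (2 * j)) = chain_midpoint (dyadic_point n (S j)) (dyadic_point n j).
Proof. now rewrite dyadic_point_S, Nat.even_succ, Nat.odd_mul, Nat.div2_succ_double. Qed.

Lemma dyadic_point_0 n : dyadic_point n 0 = q.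
Proof. induction n as [|n IH]; [reflexivity|]. now rewrite <- IH, <- (dyadic_point_even n 0). Qed.

Lemma dyadic_point_top n : dyadic_point n (Nat.pow 2 n) = x.
Proof.
  induction n as [|n IH]; [reflexivity|].
  rewrite <- IH, <- (dyadic_point_even n). f_equal.
Qed.

Let gap := v x - v q.

Lemma dyadic_point_spec n :
  (forall k, (k <= Nat.pow 2 n)%nat -> v (dyadic_point n k) = v q + INR k * gap / 2 ^ n) /\
  (forall k, (k < Nat.pow 2 n)%nat -> chained (dyadic_point n (S k)) (dyadic_point n k)).
Proof.
  induction n as [|n [IHv IHc]].
  - split.
    + intros k Hk. destruct k as [|[|k]]; simpl in Hk |- *; [|unfold gap|lia]; field.
    + intros k Hk. simpl in Hk. destruct k; [auto|lia].
  - assert (Hp : 2 ^ n <> 0) by (apply pow_nonzero; lra). simpl Nat.pow. split.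
    + intros k Hk. destruct (Nat.Even_or_Odd k) as [[j ->]|[j ->]].
      * rewrite dyadic_point_even, IHv by lia. rewrite mult_INR. simpl. field. auto.
      * rewrite Nat.add_1_r, dyadic_point_odd.
        rewrite (proj1 (chain_midpoint_spec _ _ (IHc j ltac:(lia)))), !IHv by lia.
        rewrite !S_INR, !mult_INR. simpl. field. auto.
    + intros k Hk. destruct (Nat.Even_or_Odd k) as [[j ->]|[j ->]].
      * rewrite dyadic_point_odd, dyadic_point_even. apply chain_midpoint_spec, IHc. lia.
      * replace (S (2 * j + 1)) with (2 * S j)%nat by lia.
        rewrite Nat.add_1_r, dyadic_point_odd, dyadic_point_even.
        apply chain_midpoint_spec, IHc. lia.
Qed.

Lemma dyadic_point_closure n k : (k <= Nat.pow 2 n)%nat -> K (dyadic_point n k).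
Proof.
  intro Hk. pose proof (proj2 (dyadic_point_spec n)) as Hch.
  assert (0 < Nat.pow 2 n)%nat by (apply Nat.neq_0_lt_0, Nat.pow_nonzero; lia).
  destruct (Nat.lt_ge_cases k (Nat.pow 2 n)).
  - exact (proj2 (chained_closure _ _ (Hch k ltac:(lia)))).
  - replace k with (S (k - 1)) by lia.
    exact (proj1 (chained_closure _ _ (Hch (k - 1)%nat ltac:(lia)))).
Qed.

Let mesh n := gap / (c * 2 ^ n).

Lemma gap_pos : 0 < gap.
Proof.
  pose proof (chained_dist _ _ Hxq). pose proof (dist_pos X d d_metric x q Hneq).
  unfold gap. nra.
Qed.

Lemma mesh_pos n : 0 < mesh n.
Proof.
  pose proof gap_pos. pose proof (pow_lt 2 n ltac:(lra)).
  unfold mesh. apply Rdiv_lt_0_compat; nra.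
Qed.

Lemma mesh_S n : mesh (S n) = mesh n / 2.
Proof. pose proof (pow_lt 2 n ltac:(lra)). unfold mesh. simpl. field. lra. Qed.

Lemma mesh_eventually_lt e : 0 < e -> exists N, forall n, (N <= n)%nat -> mesh n < e.
Proof.
  intro He. destruct (div_pow2_eventually_lt (gap / c) e) as [N HN]; auto.
  { apply Rlt_le, Rdiv_lt_0_compat; [apply gap_pos | lra]. }
  exists N. intros n Hn. specialize (HN n Hn). pose proof (pow_lt 2 n ltac:(lra)).
  unfold mesh. replace (gap / (c * 2 ^ n)) with (gap / c / 2 ^ n) by (field; lra). auto.
Qed.

Lemma dyadic_point_step n k : (k < Nat.pow 2 n)%nat ->
  d (dyadic_point n k) (dyadic_point n (S k)) <= mesh n.
Proof.
  intro Hk. destruct (dyadic_point_spec n) as [Hv Hch].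
  pose proof (chained_dist _ _ (Hch k Hk)) as Hd. rewrite !Hv, S_INR in Hd by lia.
  pose proof (pow_lt 2 n ltac:(lra)). rewrite dist_sym. unfold mesh.
  apply Rle_div_r; [nra|].
  replace (v q + (INR k + 1) * gap / 2 ^ n - (v q + INR k * gap / 2 ^ n)) with (gap / 2 ^ n) in Hd
    by (field; lra).
  apply Rle_div_r in Hd; lra.
Qed.

Lemma dyadic_point_dist_le n j k : (j <= k)%nat -> (k <= Nat.pow 2 n)%nat ->
  d (dyadic_point n j) (dyadic_point n k) <= (INR k - INR j) * mesh n.
Proof.
  intros Hjk Hk. induction k as [|k IH].
  - replace j with 0%nat by lia. rewrite dist_xx. lra.
  - destruct (Nat.eq_dec j (S k)) as [->|Hne]; [rewrite dist_xx; lra|].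
    specialize (IH ltac:(lia) ltac:(lia)). pose proof (dyadic_point_step n k ltac:(lia)).
    pose proof (dist_triangle (dyadic_point n j) (dyadic_point n k) (dyadic_point n (S k))).
    rewrite S_INR. lra.
Qed.

Lemma dyadic_point_dist n j k : (j <= Nat.pow 2 n)%nat -> (k <= Nat.pow 2 n)%nat ->
  d (dyadic_point n j) (dyadic_point n k) <= Rabs (INR k - INR j) * mesh n.
Proof.
  intros Hj Hk. destruct (Nat.le_ge_cases j k) as [Hjk|Hkj].
  - pose proof (le_INR _ _ Hjk). rewrite Rabs_right by lra. now apply dyadic_point_dist_le.
  - pose proof (le_INR _ _ Hkj). rewrite dist_sym, Rabs_left1 by lra.
    replace (- (INR k - INR j)) with (INR j - INR k) by ring. now apply dyadic_point_dist_le.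
Qed.

(* [dyadic_index th n] is the [k] with [k / 2 ^ n <= th <= (k + 1) / 2 ^ n], chosen by
   bisection so that consecutive indices are nested. *)
Fixpoint dyadic_index (th : R) (n : nat) : nat :=
  match n with
  | O => O
  | S n' => if Rle_dec (INR (S (2 * dyadic_index th n')) / 2 ^ (S n')) th
            then S (2 * dyadic_index th n') else (2 * dyadic_index th n')%nat
  end.

Lemma dyadic_index_S th n : dyadic_index th (S n) =
  if Rle_dec (INR (S (2 * dyadic_index th n)) / 2 ^ (S n)) th
  then S (2 * dyadic_index th n) else (2 * dyadic_index th n)%nat.
Proof. reflexivity. Qed.

Lemma dyadic_index_spec th n : 0 <= th <= 1 ->
  INR (dyadic_index th n) / 2 ^ n <= th <= INR (S (dyadic_index th n)) / 2 ^ n /\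
  (dyadic_index th n < Nat.pow 2 n)%nat.
Proof.
  intro Hth. induction n as [|n [[IH1 IH2] IH3]].
  - simpl. split; [split|]; [lra|lra|lia].
  - pose proof (pow_lt 2 n ltac:(lra)). rewrite dyadic_index_S. set (k := dyadic_index th n) in *.
    assert (E : forall m : nat, INR m / 2 ^ S n = INR m / 2 / 2 ^ n) by (intro; simpl; field; lra).
    rewrite S_INR in IH2. simpl Nat.pow.
    destruct (Rle_dec _ _) as [Hle|Hnle]; (split; [split|lia]); auto.
    + rewrite E, !S_INR, mult_INR. simpl (INR 2).
      replace ((2 * INR k + 1 + 1) / 2 / 2 ^ n) with ((INR k + 1) / 2 ^ n) by (field; lra). lra.
    + rewrite E, mult_INR. simpl (INR 2).
      replace (2 * INR k / 2 / 2 ^ n) with (INR k / 2 ^ n) by (field; lra). lra.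
    + lra.
Qed.

Let approx th n := dyadic_point n (dyadic_index th n).

Lemma approx_closure th n : 0 <= th <= 1 -> K (approx th n).
Proof. intro Hth. apply dyadic_point_closure. destruct (dyadic_index_spec th n Hth). lia. Qed.

Lemma approx_cauchy th n m : 0 <= th <= 1 -> (n <= m)%nat ->
  d (approx th m) (approx th n) <= mesh n - mesh m.
Proof.
  intros Hth Hnm. induction Hnm as [|m Hnm IH]; [rewrite dist_xx; lra|].
  assert (Hstep : d (approx th (S m)) (approx th m) <= mesh (S m)).
  { unfold approx. rewrite dyadic_index_S. destruct (dyadic_index_spec th m Hth) as [_ Hk].
    destruct (Rle_dec _ _).
    - rewrite <- (dyadic_point_even m), dist_sym. apply dyadic_point_step. simpl. lia.
    - rewrite dyadic_point_even, dist_xx. pose proof (mesh_pos (S m)). lra. }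
  pose proof (dist_triangle (approx th (S m)) (approx th m) (approx th n)).
  rewrite mesh_S in *. lra.
Qed.

Definition curve_param (th : R) : X :=
  epsilon (inhabits x) (fun p => forall n, d (approx th n) p <= mesh n).

Lemma curve_param_approx th n : 0 <= th <= 1 -> d (approx th n) (curve_param th) <= mesh n.
Proof.
  intro Hth. revert n. unfold curve_param.
  apply epsilon_spec, (compact_limit X d d_metric d_compact).
  intros n m Hnm. pose proof (approx_cauchy th n m Hth Hnm). pose proof (mesh_pos m). lra.
Qed.

Lemma curve_param_closure th : 0 <= th <= 1 -> K (curve_param th).
Proof.
  intro Hth. apply K_closed. intros r Hr. destruct (mesh_eventually_lt r Hr) as [N HN].
  exists (approx th N). split; [now apply approx_closure|].
  rewrite dist_sym. pose proof (curve_param_approx th N Hth). specialize (HN N (le_n N)). lra.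
Qed.

Lemma curve_param_lip th th' : 0 <= th <= 1 -> 0 <= th' <= 1 ->
  d (curve_param th) (curve_param th') <= Rabs (th - th') * (gap / c).
Proof.
  intros Hth Hth'. apply Rle_plus_epsilon. intros e He.
  destruct (mesh_eventually_lt (e / 3) ltac:(lra)) as [n Hn]. specialize (Hn n (le_n n)).
  pose proof (curve_param_approx th n Hth). pose proof (curve_param_approx th' n Hth').
  destruct (dyadic_index_spec th n Hth) as [[B1 B2] B3].
  destruct (dyadic_index_spec th' n Hth') as [[B1' B2'] B3'].
  pose proof (dyadic_point_dist n _ _ (Nat.lt_le_incl _ _ B3) (Nat.lt_le_incl _ _ B3')) as HG.
  fold (approx th n) (approx th' n) in HG.
  pose proof (dist_triangle (curve_param th) (approx th n) (curve_param th')).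
  pose proof (dist_triangle (approx th n) (approx th' n) (curve_param th')).
  rewrite (dist_sym (curve_param th) (approx th n)) in *.
  pose proof (pow_lt 2 n ltac:(lra)). pose proof (mesh_pos n). rewrite S_INR in B2, B2'.
  assert (Hidx : Rabs (INR (dyadic_index th' n) - INR (dyadic_index th n))
                 <= Rabs (th - th') * 2 ^ n + 1).
  { apply Rle_div_r in B2; [|lra]. apply Rle_div_r in B2'; [|lra].
    apply Rle_div_l in B1; [|lra]. apply Rle_div_l in B1'; [|lra].
    assert ((th - th') * 2 ^ n <= Rabs (th - th') * 2 ^ n)
      by (apply Rmult_le_compat_r; [lra | apply Rle_abs]).
    assert ((th' - th) * 2 ^ n <= Rabs (th - th') * 2 ^ n)
      by (apply Rmult_le_compat_r; [lra | rewrite Rabs_minus_sym; apply Rle_abs]).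
    apply Rabs_le. split; lra. }
  assert (Hs : mesh n * 2 ^ n = gap / c) by (unfold mesh; field; lra).
  apply Rmult_le_compat_r with (r := mesh n) in Hidx; [|lra].
  rewrite Rmult_plus_distr_r, Rmult_assoc, (Rmult_comm (2 ^ n)), Hs, Rmult_1_l in Hidx. lra.
Qed.

Lemma curve_param_level th : 0 <= th <= 1 -> v (curve_param th) = v q + th * gap.
Proof.
  intro Hth. apply cond_eq. intros e He.
  destruct (v_cont_sym (curve_param th) (e / 2) (curve_param_closure th Hth) ltac:(lra))
    as [dl [Hdl Hcont]].
  destruct (mesh_eventually_lt dl Hdl) as [N1 HN1].
  destruct (div_pow2_eventually_lt gap (e / 2) (Rlt_le _ _ gap_pos) ltac:(lra)) as [N2 HN2].
  set (n := Nat.max N1 N2). specialize (HN1 n ltac:(lia)). specialize (HN2 n ltac:(lia)).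
  pose proof (curve_param_approx th n Hth).
  specialize (Hcont (approx th n) (approx_closure th n Hth) ltac:(lra)).
  destruct (dyadic_index_spec th n Hth) as [[B1 B2] B3].
  unfold approx in Hcont. rewrite (proj1 (dyadic_point_spec n)) in Hcont by lia.
  pose proof (pow_lt 2 n ltac:(lra)). pose proof gap_pos. rewrite S_INR in B2.
  set (k := INR (dyadic_index th n)) in *.
  assert (Hlow : k / 2 ^ n * gap <= th * gap) by (apply Rmult_le_compat_r; lra).
  assert (Hup : th * gap <= (k + 1) / 2 ^ n * gap) by (apply Rmult_le_compat_r; lra).
  replace (k / 2 ^ n * gap) with (k * gap / 2 ^ n) in Hlow by (field; lra).
  replace ((k + 1) / 2 ^ n * gap) with (k * gap / 2 ^ n + gap / 2 ^ n) in Hup by (field; lra).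
  apply Rabs_def2 in Hcont. apply Rabs_def1; lra.
Qed.

Lemma curve_param_0 : curve_param 0 = q.
Proof.
  symmetry. apply (dist_le_eps_eq X d d_metric). intros e He.
  destruct (mesh_eventually_lt e He) as [n Hn]. specialize (Hn n (le_n n)).
  pose proof (curve_param_approx 0 n ltac:(lra)) as Happ.
  destruct (dyadic_index_spec 0 n ltac:(lra)) as [[B1 _] _].
  pose proof (pow_lt 2 n ltac:(lra)). apply Rle_div_l in B1; [|lra].
  assert (Hk : dyadic_index 0 n = 0%nat)
    by (apply INR_eq; pose proof (pos_INR (dyadic_index 0 n)); simpl; lra).
  unfold approx in Happ. rewrite Hk, dyadic_point_0 in Happ. lra.
Qed.

Lemma curve_param_1 : curve_param 1 = x.
Proof.
  symmetry. apply (dist_le_eps_eq X d d_metric). intros e He.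
  destruct (mesh_eventually_lt (e / 2) ltac:(lra)) as [n Hn]. specialize (Hn n (le_n n)).
  pose proof (curve_param_approx 1 n ltac:(lra)) as Happ.
  destruct (dyadic_index_spec 1 n ltac:(lra)) as [[_ B2] B3].
  pose proof (pow_lt 2 n ltac:(lra)). pose proof (mesh_pos n).
  apply Rle_div_r in B2; [|lra]. rewrite Rmult_1_l, S_INR in B2.
  pose proof (dyadic_point_dist_le n _ (Nat.pow 2 n) (Nat.lt_le_incl _ _ B3) (le_n _)) as Hd.
  rewrite dyadic_point_top, pow_INR in Hd. replace (INR 2) with 2 in Hd by (simpl; lra).
  fold (approx 1 n) in Hd.
  assert ((2 ^ n - INR (dyadic_index 1 n)) * mesh n <= 1 * mesh n)
    by (apply Rmult_le_compat_r; lra).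
  pose proof (dist_triangle x (approx 1 n) (curve_param 1)). rewrite dist_sym in Hd. lra.
Qed.

Lemma chained_curve : exists T ga, 0 < T /\ ga 0 = q /\ ga T = x /\
  (forall s t, 0 <= s <= T -> 0 <= t <= T -> d (ga s) (ga t) <= Rabs (s - t)) /\
  (forall t, 0 <= t <= T -> K (ga t) /\ v (ga t) = v q + c * t).
Proof.
  set (T := gap / c). assert (HT : 0 < T) by (apply Rdiv_lt_0_compat; [apply gap_pos|lra]).
  assert (Hrange : forall t, 0 <= t <= T -> 0 <= t / T <= 1).
  { intros t Ht. split; [apply Rdiv_le_0_compat; lra | apply Rle_div_l; lra]. }
  exists T, (fun t => curve_param (t / T)). split; [auto|split; [|split; [|split]]].
  - replace (0 / T) with 0 by (field; lra). apply curve_param_0.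
  - replace (T / T) with 1 by (field; lra). apply curve_param_1.
  - intros s t Hs Ht. pose proof (curve_param_lip _ _ (Hrange s Hs) (Hrange t Ht)) as Hl.
    fold T in Hl. replace (s / T - t / T) with ((s - t) / T) in Hl by (field; lra).
    rewrite Rabs_div, (Rabs_right T) in Hl by lra.
    now replace (Rabs (s - t) / T * T) with (Rabs (s - t)) in Hl by (field; lra).
  - intros t Ht. split; [now apply curve_param_closure, Hrange|].
    rewrite curve_param_level by (now apply Hrange). unfold T. field.
    pose proof gap_pos. lra.
Qed.

End DyadicCurve.

Lemma descent_curve x : Om x -> exists b T ga,
  boundary X d Om b /\ admissible_curve X d Om b x T ga /\ c * T = v x - v b.
Proof.
  intro Hx. destruct (chained_to_exterior x Hx) as [q [_ [Hq Hxq]]].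
  assert (Hneq : x <> q) by (intros ->; contradiction).
  destruct (chained_curve x q Hxq Hneq) as [T [ga [HT [H0 [HT' [Hlip Hlev]]]]]].
  destruct (admissible_last_exit X d d_metric Om T ga Om_open ltac:(lra) Hlip
              ltac:(now rewrite H0) ltac:(now rewrite HT')) as [s [Hs [Hb Hadm]]].
  rewrite HT' in Hadm. exists (ga s), (T - s), (fun t => ga (s + t)).
  split; [auto|split; [auto|]].
  rewrite <- HT' at 1. rewrite (proj2 (Hlev T ltac:(lra))), (proj2 (Hlev s ltac:(lra))). ring.
Qed.

End Descent.

(** * The value function *)

Section ShortCurves.
Variables (X : Type) (d : X -> X -> R).
Hypotheses (d_metric : is_metric X d) (d_compact : compact_space X d).
Hypothesis E10 : E10_property X d.

(* Apply the E1,0 property to the complement of a point [x]: the solution [w] vanishes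
   at [x], and its descent curves from a point [z] end at [x] with length [2 w z]. *)
Lemma short_curves x e : (exists y, y <> x) -> 0 < e ->
  exists dl, 0 < dl /\ forall z, z <> x -> d x z < dl ->
    exists T ga, admissible_curve X d (fun y => y <> x) x z T ga /\ T < e.
Proof.
  intros [y Hy] He. set (Punct := fun y : X => y <> x).
  assert (HP : nonempty_proper_open X d Punct).
  { split; [|split; [now exists y | now exists x]].
    intros z Hz. exists (d x z). split; [now apply (dist_pos X d d_metric); auto|].
    intros w Hw ->. rewrite (dist_sym X d d_metric) in Hw. lra. }
  destruct (E10 Punct HP) as [w [Hw [Hsl Hw0]]].
  destruct (classic (closure X d Punct x)) as [Hxc|Hxc].
  - assert (Hbx : boundary X d Punct x)
      by (apply (boundary_open_iff X d d_metric); [apply HP | split; auto]).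
    destruct (Hw x Hxc (e / 2) ltac:(lra)) as [dl [Hdl Hcont]].
    exists dl. split; auto. intros z Hz Hd.
    destruct (descent_curve X d d_metric d_compact Punct w (1 / 2) (proj1 HP) Hw
                (fun p Hp => slope_ge1_of_local_slope _ _ _ _ _ (Hsl p Hp)) ltac:(lra) z Hz)
      as [b [T [ga [Hb [Hadm HT]]]]].
    assert (b = x) as ->.
    { apply NNPP. intro Hbx'. now apply (boundary_open_iff X d d_metric _ _ (proj1 HP)) in Hb. }
    exists T, ga. split; auto.
    specialize (Hcont z (subset_closure X d d_metric _ _ Hz) Hd).
    rewrite (Hw0 x Hbx) in Hcont, HT. apply Rabs_def2 in Hcont. lra.
  - assert (Hiso : exists r, 0 < r /\ forall z, z <> x -> r <= d x z).
    { apply NNPP. intro Hn. apply Hxc. intros r Hr. apply NNPP. intro Hn'. apply Hn.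
      exists r. split; auto. intros z Hz. apply Rnot_lt_le. intro. apply Hn'. now exists z. }
    destruct Hiso as [r [Hr Hfar]]. exists r. split; auto.
    intros z Hz Hd. specialize (Hfar z Hz). lra.
Qed.

End ShortCurves.

Section ValueFunction.
Variables (X : Type) (d : X -> X -> R).
Hypotheses (d_metric : is_metric X d) (d_compact : compact_space X d).
Hypothesis E10 : E10_property X d.
Variable Om : X -> Prop.
Hypothesis Om_npo : nonempty_proper_open X d Om.
Variable g : X -> R.
Hypotheses (g_bounded : bounded_on X (boundary X d Om) g)
  (g_cont : continuous_on X d (boundary X d Om) g) (g_CC : CC X d Om (fun _ => 1) g).

Local Notation K := (closure X d Om).
Local Notation admissible := (admissible_curve X d).
Let dist_sym := dist_sym X d d_metric.
Let dist_xx := dist_xx X d d_metric.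
Let dist_triangle := dist_triangle X d d_metric.
Let Om_open : is_open X d Om := proj1 Om_npo.

Let boundary_iff x : boundary X d Om x <-> K x /\ ~ Om x.
Proof. now apply boundary_open_iff. Qed.

Let interior_closure x : Om x -> K x.
Proof. now apply subset_closure. Qed.

Definition arrival_cost x r :=
  exists y T ga, boundary X d Om y /\ admissible Om y x T ga /\ r = g y + T.

Definition value x := real (Glb_Rbar (arrival_cost x)).

Lemma CC_admissible x y T ga : boundary X d Om x -> boundary X d Om y ->
  admissible Om y x T ga -> g x - g y <= T.
Proof.
  intros Hx Hy Hadm. eapply (Rbar_le_trans (Finite _) _ (Finite T)); [exact (g_CC x y Hx Hy)|].
  apply (proj2_sig (Rbar_ex_glb _)). exists T, ga. split; auto.
  rewrite RInt_const. unfold scal; simpl; unfold mult; simpl. f_equal. ring.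
Qed.

Lemma arrival_cost_bounded_below x : exists M, forall r, arrival_cost x r -> M <= r.
Proof.
  destruct g_bounded as [M HM]. exists (- M). intros r [y [T [ga [Hy [[HT _] ->]]]]].
  specialize (HM y Hy). apply Rabs_le_between in HM. lra.
Qed.

Lemma value_le x r : arrival_cost x r -> value x <= r.
Proof.
  intro Hr. apply (Glb_Rbar_finite (arrival_cost x)); auto.
  - now exists r.
  - apply arrival_cost_bounded_below.
Qed.

Lemma value_approx x r0 : arrival_cost x r0 ->
  forall e, 0 < e -> exists r, arrival_cost x r /\ r < value x + e.
Proof.
  intro Hr0. apply (Glb_Rbar_finite (arrival_cost x)).
  - now exists r0.
  - apply arrival_cost_bounded_below.
Qed.

Lemma arrival_cost_boundary x : boundary X d Om x -> arrival_cost x (g x).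
Proof.
  intro Hx. exists x, 0, (fun _ => x). split; [auto|split; [|ring]].
  apply (admissible_const X d d_metric), Hx.
Qed.

Lemma value_boundary x : boundary X d Om x -> value x = g x.
Proof.
  intro Hx. apply Rle_antisym; [now apply value_le, arrival_cost_boundary|].
  apply Rle_plus_epsilon. intros e He.
  destruct (value_approx x _ (arrival_cost_boundary x Hx) e He)
    as [r [[y [T [ga [Hy [Hadm ->]]]]] Hr]].
  pose proof (CC_admissible x y T ga Hx Hy Hadm). lra.
Qed.

Lemma arrival_cost_nonempty x : K x -> exists r, arrival_cost x r.
Proof.
  intro Kx. destruct (classic (Om x)) as [Hx|Hx].
  - destruct (E10 Om Om_npo) as [w [Hw [Hsl _]]].
    destruct (descent_curve X d d_metric d_compact Om w (1 / 2) Om_open Hw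
                (fun p Hp => slope_ge1_of_local_slope _ _ _ _ _ (Hsl p Hp)) ltac:(lra) x Hx)
      as [b [T [ga [Hb [Hadm _]]]]].
    exists (g b + T), b, T, ga. auto.
  - exists (g x). now apply arrival_cost_boundary, boundary_iff.
Qed.

Lemma value_concat b z T ga : K b -> admissible Om b z T ga -> value z <= value b + T.
Proof.
  intros Kb Hadm. destruct (classic (Om b)) as [Hb|Hb].
  - destruct (arrival_cost_nonempty b Kb) as [r0 Hr0].
    apply Rle_plus_epsilon. intros e He.
    destruct (value_approx b r0 Hr0 e He) as [r [[y [T1 [ga1 [Hy [Hadm1 ->]]]]] Hr]].
    assert (Hcost : arrival_cost z (g y + T1 + T)).
    { exists y, (T1 + T), (curve_concat X T1 ga1 ga). split; [auto|split; [|ring]].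
      eapply admissible_concat; eauto. }
    pose proof (value_le _ _ Hcost). lra.
  - assert (Hbb : boundary X d Om b) by (now apply boundary_iff).
    rewrite (value_boundary b Hbb). apply value_le. exists b, T, ga. auto.
Qed.

Lemma value_near_boundary y z T ga : boundary X d Om y -> Om z ->
  admissible Om y z T ga -> Rabs (value z - g y) <= T.
Proof.
  intros Hy Hz Hadm. pose proof (value_concat y z T ga (proj1 Hy) Hadm) as Hup.
  rewrite (value_boundary y Hy) in Hup.
  assert (Hlow : g y - T <= value z).
  { destruct (arrival_cost_nonempty z (interior_closure z Hz)) as [r0 Hr0].
    apply Rle_plus_epsilon. intros e He.
    destruct (value_approx z r0 Hr0 e He) as [r [[y' [T1 [ga1 [Hy' [Hadm1 ->]]]]] Hr]].
    pose proof (admissible_concat X d d_metric Om y' z y T1 T ga1 _ Hadm1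
                  (admissible_rev X d Om y z T ga Hadm) Hz) as Hcat.
    pose proof (CC_admissible y y' _ _ Hy Hy' Hcat). lra. }
  apply Rabs_le. lra.
Qed.

Let exists_other_point (x : X) : exists y, y <> x.
Proof.
  pose proof Om_npo as [_ [[a Ha] [b Hb]]].
  destruct (classic (a = x)) as [Hax|Hax]; [exists b | now exists a].
  intros Hbx. apply Hb. now rewrite Hbx, <- Hax.
Qed.

Lemma value_cont_interior x : Om x -> forall e, 0 < e -> exists dl, 0 < dl /\
  forall z, K z -> d x z < dl -> Rabs (value x - value z) < e.
Proof.
  intros Hx e He. destruct (Om_open x Hx) as [rho [Hrho Hball]].
  destruct (short_curves X d d_metric d_compact E10 x (Rmin e rho) (exists_other_point x)
              ltac:(apply Rmin_pos; lra)) as [dl [Hdl Hshort]].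
  exists (Rmin dl rho). split; [apply Rmin_pos; lra|].
  intros z Kz Hd. pose proof (Rmin_l dl rho). pose proof (Rmin_l e rho). pose proof (Rmin_r e rho).
  destruct (classic (z = x)) as [->|Hzx]; [now rewrite Rminus_diag, Rabs_R0|].
  destruct (Hshort z Hzx ltac:(lra)) as [T [ga [Hadm HT]]].
  apply (admissible_in_ball X d d_metric Om _ x z T ga rho Hball) in Hadm; [|lra].
  pose proof (value_concat x z T ga (interior_closure x Hx) Hadm).
  pose proof (value_concat z x T _ Kz (admissible_rev X d _ _ _ _ _ Hadm)).
  apply Rabs_def1; lra.
Qed.

(* A short curve from a boundary point [x] to [z] in [Om] leaves the complement of [Om]
   for the last time at a boundary point [y], where [value] is [g y] up to the length. *)
Lemma value_cont_boundary x : boundary X d Om x -> forall e, 0 < e -> exists dl, 0 < dl /\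
  forall z, K z -> d x z < dl -> Rabs (value x - value z) < e.
Proof.
  intros Hx e He. destruct (g_cont x Hx (e / 3) ltac:(lra)) as [dg [Hdg Hg]].
  destruct (short_curves X d d_metric d_compact E10 x (Rmin (e / 3) dg) (exists_other_point x)
              ltac:(apply Rmin_pos; lra)) as [dl [Hdl Hshort]].
  exists (Rmin dl dg). split; [apply Rmin_pos; lra|].
  intros z Kz Hd. pose proof (Rmin_l dl dg). pose proof (Rmin_r dl dg).
  pose proof (Rmin_l (e / 3) dg). pose proof (Rmin_r (e / 3) dg).
  rewrite (value_boundary x Hx).
  destruct (classic (Om z)) as [Hz|Hz].
  2:{ assert (Hbz : boundary X d Om z) by (now apply boundary_iff).
      rewrite (value_boundary z Hbz). specialize (Hg z Hbz ltac:(lra)). lra. }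
  assert (Hzx : z <> x) by (intros ->; now apply boundary_iff in Hx).
  destruct (Hshort z Hzx ltac:(lra)) as [T [ga [Hadm HT]]].
  destruct Hadm as [HT0 [Hlip [_ [Hga0 [HgaT _]]]]].
  destruct (admissible_last_exit X d d_metric Om T ga Om_open HT0 Hlip
              ltac:(rewrite Hga0; now apply boundary_iff in Hx) ltac:(now rewrite HgaT))
    as [s [Hs [Hby Hadm]]].
  rewrite HgaT in Hadm. set (y := ga s) in *.
  assert (Hdy : d x y <= s).
  { rewrite <- Hga0. eapply Rle_trans; [apply Hlip; lra|]. rewrite Rabs_left1; lra. }
  specialize (Hg y Hby ltac:(lra)). pose proof (value_near_boundary y z _ _ Hby Hz Hadm) as Hnear.
  apply Rabs_def2 in Hg. apply Rabs_le_between in Hnear. apply Rabs_def1; lra.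
Qed.

Lemma value_continuous : continuous_on X d K value.
Proof.
  intros x Kx. destruct (classic (Om x)) as [Hx|Hx].
  - now apply value_cont_interior.
  - now apply value_cont_boundary, boundary_iff.
Qed.

(* Stopping a near-optimal curve to [x] a little before its end gives a point [z] with
   [value z <= value x - (almost) d x z]. *)
Lemma value_slope_ge1 x : Om x -> slope_ge1 X d Om value x.
Proof.
  intros Hx r Hr c Hc. destruct (Om_open x Hx) as [rho [Hrho Hball]].
  set (eta := Rmin r rho / 2).
  assert (Heta : 0 < eta /\ eta < r /\ eta < rho).
  { unfold eta. pose proof (Rmin_l r rho). pose proof (Rmin_r r rho).
    assert (0 < Rmin r rho) by (apply Rmin_pos; lra). lra. }
  set (eps := eta * (1 - c) / 2).
  assert (Heps : 0 < eps < eta) by (unfold eps; split; nra).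
  destruct (arrival_cost_nonempty x (interior_closure x Hx)) as [r0 Hr0].
  destruct (value_approx x r0 Hr0 eps (proj1 Heps)) as [r1 [[y [T [ga [Hy [Hadm ->]]]]] Hr1]].
  assert (Hfar : rho <= T).
  { pose proof (admissible_dist_le X d Om y x T ga Hadm). rewrite dist_sym in H.
    apply Rnot_lt_le. intro. apply boundary_iff in Hy as [_ Hy]. apply Hy, Hball. lra. }
  pose proof Hadm as [HT0 [Hlip [Hcl [H0 [HT' _]]]]].
  set (z := ga (T - eta)).
  assert (Hz : arrival_cost z (g y + (T - eta))).
  { exists y, (T - eta), ga. split; [auto|split; [|reflexivity]].
    apply (admissible_prefix X d Om y x T); auto. lra. }
  pose proof (value_le z _ Hz).
  assert (Hdz : d x z <= eta).
  { rewrite <- HT'. unfold z. eapply Rle_trans; [apply Hlip; lra|]. rewrite Rabs_right; lra. }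
  assert (Hpos : 0 < d x z).
  { apply (dist_pos X d d_metric). intros Hxz. rewrite <- Hxz in H. lra. }
  exists z. split; [apply Hcl; lra|split; [lra|]].
  assert (c * d x z <= c * eta) by (apply Rmult_le_compat_l; lra).
  unfold eps in *. nra.
Qed.

Definition ball_superlevel (x : X) (rho : R) (q : X) : Prop :=
  d x q < rho /\ value x - rho / 2 < value q.

Section LocalComparison.
Variables (x : X) (rho : R).
Hypotheses (Hrho : 0 < rho) (Hball : forall y, d x y < 2 * rho -> Om y).
Local Notation Om' := (ball_superlevel x rho).

Lemma ball_superlevel_center : Om' x.
Proof. split; [rewrite dist_xx|]; lra. Qed.

Lemma ball_superlevel_sub q : Om' q -> Om q.
Proof. intros [Hq _]. apply Hball. lra. Qed.

Lemma ball_superlevel_npo : nonempty_proper_open X d Om'.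
Proof.
  split; [|split; [exists x; apply ball_superlevel_center|]].
  - intros q [Hq1 Hq2]. assert (Hq : Om q) by (apply Hball; lra).
    destruct (value_cont_interior q Hq (value q - (value x - rho / 2)) ltac:(lra))
      as [dq [Hdq Hcont]].
    exists (Rmin dq (rho - d x q)). split; [apply Rmin_pos; lra|].
    intros y Hy. pose proof (Rmin_l dq (rho - d x q)). pose proof (Rmin_r dq (rho - d x q)).
    pose proof (dist_triangle x q y). split; [lra|].
    specialize (Hcont y (interior_closure y (Hball y ltac:(lra))) ltac:(lra)).
    apply Rabs_def2 in Hcont. lra.
  - pose proof Om_npo as [_ [_ [a Ha]]]. exists a. intro. now apply Ha, ball_superlevel_sub.
Qed.

Lemma ball_superlevel_closure q : closure X d Om' q ->
  d x q <= rho /\ Om q /\ value x - rho / 2 <= value q.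
Proof.
  intros Hq. assert (Hd : d x q <= rho).
  { apply Rle_plus_epsilon. intros e He. destruct (Hq e He) as [y [[Hy _] Hqy]].
    pose proof (dist_triangle x y q). rewrite (dist_sym y q) in *. lra. }
  assert (Hoq : Om q) by (apply Hball; lra).
  split; [auto|split; [auto|]].
  apply Rle_plus_epsilon. intros e He.
  destruct (value_cont_interior q Hoq e He) as [dl [Hdl Hcont]].
  destruct (Hq dl Hdl) as [y [Hy Hqy]].
  specialize (Hcont y (interior_closure y (ball_superlevel_sub y Hy)) Hqy).
  destruct Hy as [_ Hy]. apply Rabs_def2 in Hcont. lra.
Qed.

Variable w : X -> R.
Hypotheses (w_cont : continuous_on X d (closure X d Om') w)
  (w_slope : forall q, Om' q -> local_slope X d Om' w q = Finite 1)
  (w_zero : forall q, boundary X d Om' q -> w q = 0).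

(* A descent curve of [w] reaching [x] starts on the boundary of [Om'], either on the
   sphere of radius [rho] or where [value] has dropped by [rho / 2]: it has length
   [>= rho / 2] either way. *)
Lemma local_solution_center : rho / 2 <= w x.
Proof.
  apply le_of_scaled_le; [lra|]. intros c0 Hc0.
  destruct (descent_curve X d d_metric d_compact Om' w c0 (proj1 ball_superlevel_npo) w_cont
              (fun p Hp => slope_ge1_of_local_slope _ _ _ _ _ (w_slope p Hp)) Hc0 x
              ball_superlevel_center) as [b [T [ga [Hb [Hadm HT]]]]].
  rewrite (w_zero b Hb) in HT.
  apply (boundary_open_iff X d d_metric _ _ (proj1 ball_superlevel_npo)) in Hb as [Hbc Hbn].
  destruct (ball_superlevel_closure b Hbc) as [Hb1 [Hb2 Hb3]].
  enough (rho / 2 <= T) by (apply Rmult_le_compat_l with (r := c0) in H; lra).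
  destruct (Rlt_dec (d x b) rho) as [Hlt|Hge].
  - assert (value b <= value x - rho / 2) by (apply Rnot_lt_le; intro; apply Hbn; split; auto).
    assert (Hadm' : admissible Om b x T ga).
    { eapply admissible_mono; [| |exact Hadm].
      - intros z Hz. now apply interior_closure, ball_superlevel_closure.
      - apply ball_superlevel_sub. }
    pose proof (value_concat b x T ga (interior_closure b Hb2) Hadm'). lra.
  - pose proof (admissible_dist_le X d Om' b x T ga Hadm) as Hdist. rewrite dist_sym in Hdist. lra.
Qed.

(* Follow a near-optimal curve for [value z] backwards from [z] until it leaves [Om']:
   [w] grows at most by the length of that piece, and [value] drops by at least as much. *)
Lemma local_solution_le z : Om' z -> w z <= value z - value x + rho / 2.
Proof.
  intros Hz. apply Rle_plus_epsilon. intros e He.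
  destruct (arrival_cost_nonempty z (interior_closure z (ball_superlevel_sub z Hz))) as [r0 Hr0].
  destruct (value_approx z r0 Hr0 e He) as [r [[y [T [ga [Hy [Hadm ->]]]]] Hr]].
  pose proof Hadm as [HT0 [Hlip [_ [H0 [HT' _]]]]].
  assert (Hny : ~ Om' (ga 0)).
  { rewrite H0. intro Hy'. apply boundary_iff in Hy as [_ Hny].
    now apply Hny, ball_superlevel_sub. }
  destruct (admissible_last_exit X d d_metric Om' T ga (proj1 ball_superlevel_npo) HT0 Hlip Hny
              ltac:(now rewrite HT')) as [s [Hs [Hbs Hadm2]]].
  rewrite HT' in Hadm2.
  pose proof (slope_le1_along_curve X d d_metric Om' w _ _ _ _ w_cont
                (fun p Hp => slope_le1_of_local_slope _ _ _ _ _ (w_slope p Hp)) Hadm2 Hz) as Hw.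
  rewrite (w_zero _ Hbs) in Hw.
  assert (Hcost : arrival_cost (ga s) (g y + s)).
  { exists y, s, ga. split; [auto|split; [|reflexivity]].
    apply (admissible_prefix X d Om y z T); auto. lra. }
  pose proof (value_le _ _ Hcost).
  apply (boundary_open_iff X d d_metric _ _ (proj1 ball_superlevel_npo)) in Hbs as [Hbc _].
  destruct (ball_superlevel_closure _ Hbc) as [_ [_ Hlow]]. lra.
Qed.

End LocalComparison.

Lemma value_slope_le1 x : Om x -> slope_le1 X d Om value x.
Proof.
  intros Hx c Hc. destruct (Om_open x Hx) as [rho0 [Hrho0 Hball]].
  set (rho := rho0 / 2).
  assert (Hball' : forall y, d x y < 2 * rho -> Om y)
    by (intros y Hy; apply Hball; unfold rho in Hy; lra).
  assert (Hrho : 0 < rho) by (unfold rho; lra).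
  destruct (E10 _ (ball_superlevel_npo x rho Hrho Hball')) as [w [Hw [Hsl Hw0]]].
  destruct (slope_le1_of_local_slope _ _ _ _ _ (Hsl x (ball_superlevel_center x rho Hrho)) c Hc)
    as [r1 [Hr1 Hwle]].
  destruct (value_cont_interior x Hx (rho / 2) ltac:(lra)) as [du [Hdu Hcont]].
  exists (Rmin r1 (Rmin rho du)). split; [repeat apply Rmin_pos; lra|].
  intros z Kz Hd. pose proof (Rmin_l r1 (Rmin rho du)). pose proof (Rmin_r r1 (Rmin rho du)).
  pose proof (Rmin_l rho du). pose proof (Rmin_r rho du).
  specialize (Hcont z Kz ltac:(lra)). apply Rabs_def2 in Hcont.
  assert (Hz : ball_superlevel x rho z) by (split; lra).
  specialize (Hwle z (subset_closure X d d_metric _ _ Hz) ltac:(lra)).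
  pose proof (local_solution_center x rho Hrho Hball' w Hw Hsl Hw0).
  pose proof (local_solution_le x rho Hrho Hball' w Hw Hsl Hw0 z Hz). lra.
Qed.

End ValueFunction.

Theorem proposition5p4 (X : Type) (d : X -> X -> R) :
  is_metric X d -> compact_space X d -> E10_property X d -> E1g_property X d.
Proof.
  intros Hm Hc HE Om HOm g Hgb Hgc HCC.
  exists (value X d Om g). split; [|split].
  - now apply value_continuous.
  - intros x Hx. apply local_slope_eq1_iff. split.
    + now apply value_slope_ge1.
    + now apply value_slope_le1.
  - intros x Hx. now apply value_boundary.
Qed.
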